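(* Let $D$ be an oriented twisted link diagram and let $(F, D_F)$ be a link diagram realization of $D$. Let $(F,\bar s)$ be an irreducible surface pole state obtained from a surface pole state $(F,s)$ of $(F,D_F)$, and let $R$ be a connected component of $F\setminus \bar s$ ($=F\setminus s$). Then the number of I-poles on $\bar s$ lying in $R$ is equal to the number of O-poles on $\bar s$ lying in $R$.
   Context: A twisted link diagram is a link diagram in the plane which may have classical crossings, virtual crossings (crossings without over/under information), and bars (short marks) on arcs. An abstract link diagram is a pair $(\Sigma,D_\Sigma)$ of a compact, possibly non-orientable surface $\Sigma$ and a link diagram $D_\Sigma$ in $\Sigma$ such that the underlying 4-valent graph of $D_\Sigma$ is a deformation retract of $\Sigma$. The abstract link diagram associated with a twisted link diagram $D$ (Bourgoin's construction) is obtained by taking a small disk containing each classical crossing, a pair of disjoint bands at each virtual crossing, and bands along the arcs of $D$, where at each bar the band receives a half twist. A link diagram realization of $D$ is a pair $(F,D_F)$ where $F$ is a closed, possibly non-orientable surface and there is an embedding $f:\Sigma\to F$ with $f(D_\Sigma)=D_F$; $D_F$ is oriented by the orientation of $D$. A pole curve in $F$ is a simple closed curve in $F$ carrying finitely many (possibly zero) marked points called poles, such that the complement of the poles in the curve is a union of oriented arcs, and at each pole the orientations of the two adjacent arcs either both point toward the pole (sink pole, I-pole) or both point away from it (source pole, O-pole). Each pole carries a marker pointing to one local side of the curve; a pole on a collection $s$ of curves lies in the component of $F\setminus s$ into which its marker points. A pole curve link is a collection of pairwise disjoint pole curves. A surface pole state $(F,s)$ of $(F,D_F)$ is obtained by replacing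 every crossing of $D_F$ by its A-splice or its B-splice. Of the two smoothings at a crossing, one is compatible with the orientations of both strands and produces no poles; the other produces two arcs each carrying one pole, one sink and one source, with both markers pointing into the region between the two new arcs. A pole reduction on a pole curve removes two consecutive poles (necessarily one sink and one source) whose markers point to the same side of the curve, reorienting the arc between them so that the curve remains consistently oriented there. A pole curve is irreducible if no pole reduction applies, and a pole curve link is irreducible if every component is. Applying pole reductions to all pole curves of $s$ until none applies yields an irreducible pole curve link $\bar s$; $(F,\bar s)$ is the irreducible surface pole state associated with $(F,s)$. *)

From mathcomp Require Import all_boot.

Set Implicit Arguments.
Unset Strict Implicit.
Unset Printing Implicit Defensive.

(* At every classical crossing of the (planar)
   twisted link diagram D the four ends are labelled 0,1,2,3
   counterclockwise in the plane, end 0 being the end through which the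
   over-strand ENTERS the crossing; the over-strand leaves through end 2.
   The under-strand enters through end 1 or end 3 (recorded by [uin1]) and
   leaves through the opposite end.  Corner c of a crossing is the sector
   between end c and end c+1 (mod 4).                                       *)

Definition rot (k : 'I_4) (j : nat) : 'I_4 := inord ((k + j) %% 4).

Definition incoming_of (C : Type) (uin1 : C -> bool) (e : C * 'I_4) : bool :=
  (e.2 == 0 :> nat) || (e.2 == (if uin1 e.1 then 1 else 3) :> nat).

(* An oriented twisted link diagram, up to the data on which Bourgoin's
   abstract link diagram depends:
   - cr        : the classical crossings;
   - uin1      : orientation/sign data at each crossing (see above);
   - partner   : following the arc of D leaving an end we arrive (possibly
                 through virtual crossings and bars) at the partner end;
                 arcs go from an outgoing end to an incoming end;
   - twist     : parity of the number of bars on that arc;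
   - ncirc, circ_twist : components of D without classical crossings, with
                 the parity of their number of bars.                        *)
Record tld := TLD {
  cr :> finType;
  uin1 : cr -> bool;
  partner : cr * 'I_4 -> cr * 'I_4;
  twist : cr * 'I_4 -> bool;
  ncirc : nat;
  circ_twist : 'I_ncirc -> bool;
  partnerK : forall e, partner (partner e) = e;
  partner_io : forall e,
    incoming_of uin1 (partner e) = ~~ incoming_of uin1 e;
  twist_sym : forall e, twist (partner e) = twist e
}.

Section Model.
Variable D : tld.

Definition incoming (e : D * 'I_4) := incoming_of (@uin1 D) e.

(* Adjacent corner at end k: b = false -> corner k (on the left when leaving
   the crossing along end k); b = true -> corner k-1 (on the right).       *)
Definition corner (k : 'I_4) (b : bool) : 'I_4 := if b then rot k 3 else k.

(* A state: st x = true means the A-splice at x, false the B-splice.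
   With the labelling above, the A-regions are the corners 0 and 2, the
   A-splice joins ends 1-2 and 3-0 (merging corners 0,2 into the region
   between the two new arcs); the B-splice joins ends 0-1 and 2-3 (merging
   corners 1,3).                                                            *)
Definition midc (st : D -> bool) (x : D) (c : 'I_4) : bool :=
  if st x then ~~ odd c else odd c.

Definition arcmate (st : D -> bool) (x : D) (k : 'I_4) : 'I_4 :=
  if st x then inord (3 - k) else (if odd k then rot k 3 else rot k 1).

(* the smoothing at x is the non-oriented one (it joins the two incoming
   ends together, and the two outgoing ends together). *)
Definition nonor (st : D -> bool) (x : D) : bool :=
  if uin1 x then ~~ st x else st x.

(* Poles: (x, true) is the I-pole (sink) on the arc joining the two incoming
   ends at a non-oriented crossing x, (x, false) the O-pole (source) on the
   arc joining the two outgoing ends.  Both markers point into the region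
   between the two arcs.                                                   *)
Definition pole := (D * bool)%type.

Definition poles0 (st : D -> bool) : {set pole} := [set p | nonor st p.1].

(* A walk state ((x,k), out, b): we are at end k of crossing x, about to
   leave the crossing disk along the band (out = true) or about to enter
   the disk (out = false); the tracked side is the corner [corner k b].     *)
Definition wstate := ((D * 'I_4) * bool * bool)%type.

Definition step (st : D -> bool) (w : wstate) : wstate :=
  let: (e, out, b) := w in
  if out then (partner e, false, if twist e then b else ~~ b)
  else ((e.1, arcmate st e.1 e.2), true, ~~ b).

(* entering a disk on an arc that carries a pole still present in A *)
Definition hits (st : D -> bool) (A : {set pole}) (w : wstate) : bool :=
  let: (e, out, b) := w in
  [&& ~~ out, nonor st e.1 & (e.1, incoming e) \in A].

(* p and q are consecutive poles on a curve of the pole curve link whose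
   pole set is A, and their markers point to the same side of the curve
   (the side of p's marker, continued along the arc from p to q, is the
   side of q's marker). *)
Definition consec_same (st : D -> bool) (A : {set pole}) (p q : pole) : Prop :=
  [/\ p \in A, q \in A, q != p &
   exists (k : 'I_4) (b : bool) (n : nat),
     let w i := iter i (step st) ((p.1, k), true, b) in
     [/\ incoming (p.1, k) = p.2,
         midc st p.1 (corner k b),
         (forall i, 0 < i < n -> ~~ hits st A (w i)) &
         let: (e, out, b') := w n in
         [/\ out = false, e.1 = q.1, incoming e = q.2 &
             midc st q.1 (corner e.2 b')]]].

Inductive reduces (st : D -> bool) : {set pole} -> {set pole} -> Prop :=
| red_refl A : reduces st A A
| red_step A B p q : consec_same st A p q ->
    reduces st ((A :\ p) :\ q) B -> reduces st A B.

Definition irreducible (st : D -> bool) (A : {set pole}) : Prop :=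
  forall p q, ~ consec_same st A p q.

(* Pieces of Sigma \ s: the corners of the crossing disks, and the two sides
   of each crossing-free component.  Every component of Sigma \ s is a union
   of pieces; two corners joined by a side of a band lie on the same boundary
   circle of Sigma. *)
Definition piece := ((D * 'I_4) + ('I_(ncirc D) * bool))%type.

Definition band_other (e : D * 'I_4) (b : bool) : piece :=
  inl ((partner e).1, corner (partner e).2 (if twist e then b else ~~ b)).

(* A link diagram realization (F, D_F), seen through what it does to the
   complement: blk labels every boundary circle of Sigma by the component of
   F \ int f(Sigma) it bounds. *)
Record realization := Realization {
  blk : piece -> nat;
  blk_band : forall e b, blk (inl (e.1, corner e.2 b)) = blk (band_other e b);
  blk_mob : forall j, circ_twist j -> blk (inr (j, true)) = blk (inr (j, false))
}.

Definition regrel (F : realization) (st : D -> bool) : rel piece :=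
  fun u v => (blk F u == blk F v) ||
    match u, v with
    | inl (x, c), inl (y, d) => [&& x == y, midc st x c & midc st x d]
    | _, _ => false
    end.

(* piece containing (the marker of) a pole: a middle corner of its crossing *)
Definition polepiece (st : D -> bool) (p : pole) : piece :=
  inl (p.1, if st p.1 then ord0 else inord 1).

Definition in_region (F : realization) (st : D -> bool) (r : piece) (p : pole) :=
  connect (regrel F st) r (polepiece st p).

End Model.

From mathcomp Require Import all_boot.

(* The pole curves of every state reachable from the initial pole state by
   pole reductions carry a consistent orientation: continued along bands and
   along pole-free arcs, pointing into each sink and out of each source.
   Between two consecutive poles the orientation is continued, so it cannot
   point towards both or away from both: one is an I-pole and the other an
   O-pole.  Reversing the stretch of curve between them keeps the orientation
   consistent, and that stretch runs from one marker to the other inside a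
   single region of F \ s.  So each reduction removes one I-pole and one
   O-pole of the same region, while initially the two poles at a crossing
   share their region. *)

Set Implicit Arguments.
Unset Strict Implicit.
Unset Printing Implicit Defensive.

Section Crossing.
Variables (D : tld) (st : D -> bool) (x : D).

Lemma arcmateK : involutive (arcmate st x).
Proof.
move=> k; rewrite /arcmate; case: (st x); apply/val_inj;
by case: k => [[|[|[|[|m]]]] Hk] //=; rewrite ?inordK.
Qed.

Lemma arcmate_neq k : arcmate st x k != k.
Proof.
rewrite /arcmate -val_eqE; case: (st x);
by case: k => [[|[|[|[|m]]]] Hk] //=; rewrite ?inordK.
Qed.

Lemma incoming_arcmate k :
  incoming (x, arcmate st x k) = nonor st x (+) ~~ incoming (x, k).
Proof.
rewrite /arcmate /nonor /incoming /incoming_of /=; case: (st x); case: (uin1 x);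
by case: k => [[|[|[|[|m]]]] Hk] //=; rewrite ?inordK.
Qed.

Lemma incoming_eq_nonor k l : nonor st x ->
  incoming (x, k) = incoming (x, l) -> l = k \/ l = arcmate st x k.
Proof.
rewrite /arcmate /nonor /incoming /incoming_of /=;
case: (st x); case: (uin1 x) => //= _;
case: k => [[|[|[|[|m]]]] Hk] //=; case: l => [[|[|[|[|m']]]] Hl] //= _;
by [left; apply/val_inj | right; apply/val_inj; rewrite /= ?inordK].
Qed.

Lemma corner_arcmate k b :
  corner (arcmate st x k) (~~ b) = corner k b \/
  midc st x (corner k b) && midc st x (corner (arcmate st x k) (~~ b)).
Proof.
rewrite /arcmate /midc /corner /rot; case: (st x); case: b;
case: k => [[|[|[|[|m]]]] Hk] //=;
by [left; apply/val_inj; rewrite /= ?inordK | right; rewrite /= ?inordK].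
Qed.

End Crossing.

Section Orientation.
Variables (D : tld) (st : D -> bool).

Definition mate (e : D * 'I_4) : D * 'I_4 := (e.1, arcmate st e.1 e.2).

Definition end_pole (e : D * 'I_4) : pole D := (e.1, incoming e).

Definition on_pole (A : {set pole D}) (e : D * 'I_4) : bool :=
  nonor st e.1 && (end_pole e \in A).

(* [o e] tells whether the pole curve through end e points into the crossing.
   Along a band, and along a pole-free arc inside a disk, the orientation is
   continued; the two ends of an arc carrying a pole (both incoming or both
   outgoing for D) keep the orientation of D, towards a sink or away from a
   source. *)
Definition orientation (A : {set pole D}) (o : D * 'I_4 -> bool) : Prop :=
  (forall e, o (partner e) = ~~ o e) /\
  (forall e, if on_pole A e then o e = incoming e else o (mate e) = ~~ o e).

Definition orientable (A : {set pole D}) : Prop := exists o, orientation A o.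

Lemma mateK : involutive mate.
Proof. by case=> x k; rewrite /mate /= arcmateK. Qed.

Lemma mate_neq e : mate e != e.
Proof. by case: e => x k; rewrite /mate xpair_eqE eqxx arcmate_neq. Qed.

Lemma end_pole_mate e : nonor st e.1 -> end_pole (mate e) = end_pole e.
Proof.
by case: e => x k /= nx; rewrite /end_pole /mate /= incoming_arcmate nx /= negbK.
Qed.

Lemma on_pole_mate A e : on_pole A (mate e) = on_pole A e.
Proof.
by rewrite /on_pole /=; case nx: (nonor st e.1); rewrite //= end_pole_mate.
Qed.

Lemma end_pole_inj u z : nonor st z.1 -> end_pole u = end_pole z ->
  u = z \/ u = mate z.
Proof.
case: u z => x k [y l] /= ny [exy inc]; subst x.
by case: (incoming_eq_nonor ny (esym inc)) => ->; [left | right].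
Qed.

Lemma mate_in_pair u z z' : nonor st z.1 ->
  end_pole u = end_pole z -> end_pole z' != end_pole z ->
  (mate u == z) || (mate u == z') = ~~ ((u == z) || (u == z')).
Proof.
move=> nz uz z'z; have nu : nonor st u.1 by case: uz => ->.
have /negbTE mz' : mate u != z'.
  by apply/eqP=> mu; move: z'z; rewrite -mu end_pole_mate // uz eqxx.
have /negbTE uz' : u != z' by apply/eqP=> eu; move: z'z; rewrite -eu uz eqxx.
rewrite mz' uz' !orbF; case: (end_pole_inj nz uz) => ->.
  by rewrite (negbTE (mate_neq z)) eqxx.
by rewrite mateK eqxx mate_neq.
Qed.

Lemma orientable_poles0 : orientable (poles0 st).
Proof.
exists (@incoming D); split=> [e|e]; first exact: partner_io.
rewrite /on_pole inE; case nx: (nonor st e.1) => //.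
by rewrite /mate incoming_arcmate nx.
Qed.

(* The ends met along the state curve after leaving a crossing through end e:
   bands (from even steps) and arcs inside disks (from odd steps) alternate. *)
Fixpoint trail (e : D * 'I_4) (i : nat) : D * 'I_4 :=
  if i is i'.+1 then (if odd i' then mate else @partner D) (trail e i') else e.

Lemma iter_step_trail e b i :
  (iter i (step st) (e, true, b)).1 = (trail e i, ~~ odd i).
Proof.
elim: i => [|i IH] //=; move: IH.
by case: (iter i (step st) _) => [[e' out] b'] /= [-> ->]; case: (odd i).
Qed.

Lemma hits_iter A e b i :
  hits st A (iter i (step st) (e, true, b)) = odd i && on_pole A (trail e i).
Proof.
move: (iter_step_trail e b i).
by case: (iter i (step st) _) => [[e' out] b'] [-> ->]; rewrite /hits negbK.
Qed.

Section Reduction.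
Variables (A : {set pole D}) (o : D * 'I_4 -> bool) (e0 : D * 'I_4) (n : nat).
Hypotheses (oA : orientation A o) (pole0 : on_pole A e0).
Hypotheses (polen : on_pole A (trail e0 n)) (odd_n : odd n).
Hypothesis pole_free : forall i, 0 < i < n -> odd i -> ~~ on_pole A (trail e0 i).

Lemma orientation_trail i : i <= n -> o (trail e0 i) = odd i (+) incoming e0.
Proof.
case: oA => o_partner o_mate.
elim: i => [|i IH] lein; first by move: (o_mate e0); rewrite pole0.
rewrite /= addNb -(IH (ltnW lein)); case odd_i: (odd i); last by rewrite o_partner.
have /negbTE free_i : ~~ on_pole A (trail e0 i).
  by apply: pole_free; rewrite // lein andbT; case: (i) odd_i.
by move: (o_mate (trail e0 i)); rewrite free_i.
Qed.

Lemma incoming_trail_end : incoming (trail e0 n) = ~~ incoming e0.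
Proof.
case: oA => _ /(_ (trail e0 n)); rewrite polen => <-.
by rewrite orientation_trail // odd_n.
Qed.

Lemma on_pole_trail i : i <= n -> on_pole A (trail e0 i) -> i = 0 \/ i = n.
Proof.
case: i => [|i] lein /=; first by left.
case odd_i: (odd i); last move=> pole_i.
  have /negbTE free_i : ~~ on_pole A (trail e0 i).
    by apply: pole_free; rewrite // lein andbT; case: (i) odd_i.
  by rewrite on_pole_mate free_i.
right; apply/eqP; rewrite eqn_leq lein leqNgt; apply/negP => ltin.
by have := @pole_free i.+1; rewrite ltin /= odd_i pole_i => /(_ isT isT).
Qed.

Definition trail_set : {set D * 'I_4} := [set trail e0 i | i : 'I_n.+1].

Lemma mem_trailP u : reflect (exists2 i, i <= n & trail e0 i = u) (u \in trail_set).
Proof.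
apply: (iffP imsetP) => [[i _ ->] | [i lein <-]].
  by exists i => //; rewrite -ltnS ltn_ord.
by exists (Ordinal (lein : i < n.+1)).
Qed.

Lemma partner_trail u : (partner u \in trail_set) = (u \in trail_set).
Proof.
suff sub v : v \in trail_set -> partner v \in trail_set.
  by apply/idP/idP => [/sub|/sub //]; rewrite partnerK.
case/mem_trailP=> [[|i] lein <-]; apply/mem_trailP.
  by exists 1; case: n odd_n.
case odd_i: (odd i); last by exists i; rewrite /= ?odd_i ?partnerK // ltnW.
exists i.+2; last by rewrite /= odd_i.
rewrite ltn_neqAle lein andbT; apply: contraTneq odd_n => <- /=.
by rewrite odd_i.
Qed.

Lemma mate_trail u : ~~ on_pole A u -> (mate u \in trail_set) = (u \in trail_set).
Proof.
suff sub v : ~~ on_pole A v -> v \in trail_set -> mate v \in trail_set.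
  move=> free_u; apply/idP/idP; last exact: sub.
  by rewrite -{2}(mateK u); apply: sub; rewrite on_pole_mate.
move=> free_v /mem_trailP [[|i] lein ev]; first by move: free_v; rewrite -ev pole0.
apply/mem_trailP; case odd_i: (odd i).
  by exists i; rewrite 1?ltnW // -ev /= odd_i mateK.
exists i.+2; last by rewrite -ev /= odd_i.
rewrite ltn_neqAle lein andbT; apply: contraNneq free_v => en.
by rewrite -ev en.
Qed.

Lemma trail_set_on_pole u :
  on_pole A u -> (u \in trail_set) = (u == e0) || (u == trail e0 n).
Proof.
move=> pole_u; apply/mem_trailP/idP => [[i lein eu] | ].
  by subst u; case: (on_pole_trail lein pole_u) => ->; rewrite eqxx ?orbT.
by case/orP=> /eqP ->; [exists 0 | exists n].
Qed.

(* The reduction of the poles at both ends of the trail reverses the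
   orientation along it. *)
Lemma orientation_setD2 :
  orientation ((A :\ end_pole e0) :\ end_pole (trail e0 n))
              (fun u => o u (+) (u \in trail_set)).
Proof.
case: oA => o_partner o_mate; split=> u.
  by rewrite o_partner partner_trail addNb.
have poles_differ : end_pole (trail e0 n) != end_pole e0.
  by apply/eqP=> -[_]; rewrite incoming_trail_end; case: (incoming e0).
have -> : on_pole ((A :\ end_pole e0) :\ end_pole (trail e0 n)) u =
    [&& on_pole A u, end_pole u != end_pole e0
      & end_pole u != end_pole (trail e0 n)].
  rewrite /on_pole !inE.
  by move: (nonor _) (end_pole u \in A) (end_pole u != end_pole e0)
            (end_pole u != end_pole (trail e0 n)) => [] [] [] [].
case pole_u: (on_pole A u) => /=; last first.
  move: (o_mate u); rewrite pole_u (mate_trail (negbT pole_u)) => ->.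
  by rewrite addNb.
rewrite trail_set_on_pole //; case: ifP => [/andP [ne0 nen] | /nandP old_u].
  have /negbTE -> : ~~ ((u == e0) || (u == trail e0 n)).
    by apply/norP; split; apply/eqP=> eu; rewrite eu eqxx in ne0 nen.
  by move: (o_mate u); rewrite pole_u addbF.
have nu : nonor st u.1 by case/andP: pole_u.
move: (o_mate u) (o_mate (mate u)); rewrite on_pole_mate pole_u => -> ->.
rewrite trail_set_on_pole ?on_pole_mate //.
rewrite -[incoming (mate u)]/(end_pole (mate u)).2.
rewrite end_pole_mate //= -addbN; congr (_ (+) _).
case: old_u => /negPn /eqP old_u.
  by apply: mate_in_pair; [case/andP: pole0 | exact: old_u | ].
rewrite orbC [(u == _) || _]orbC.
by apply: mate_in_pair; [case/andP: polen | exact: old_u | rewrite eq_sym].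
Qed.

End Reduction.

Lemma orientable_reduction (A : {set pole D}) (p q : pole D) :
  A \subset poles0 st -> orientable A -> consec_same st A p q ->
  q.2 = ~~ p.2 /\ orientable ((A :\ p) :\ q).
Proof.
move=> /subsetP A_poles [o oA] [pA qA _ [k [b [n /= [inc_k _ no_hit]]]]].
move: (iter_step_trail (p.1, k) b n).
case: (iter n (step st) _) => [[e out] b'] [-> ->] [/negbFE odd_n e_q inc_e _].
set e0 := (p.1, k).
have nonor_pole r : r \in A -> nonor st r.1 by move/A_poles; rewrite inE.
have e0_p : end_pole e0 = p by rewrite /end_pole inc_k -surjective_pairing.
have en_q : end_pole (trail e0 n) = q.
  by rewrite /end_pole e_q inc_e -surjective_pairing.
have pole0 : on_pole A e0 by rewrite /on_pole e0_p pA nonor_pole.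
have polen : on_pole A (trail e0 n) by rewrite /on_pole en_q qA e_q nonor_pole.
have pole_free i : 0 < i < n -> odd i -> ~~ on_pole A (trail e0 i).
  by move=> /no_hit; rewrite hits_iter => /nandP [/negP | //].
split; first by rewrite -en_q -e0_p /= (incoming_trail_end oA).
by exists (fun u => o u (+) (u \in trail_set e0 n)); rewrite -e0_p -en_q;
  apply: orientation_setD2.
Qed.

Definition walk_piece (w : wstate D) : piece D :=
  inl (w.1.1.1, corner w.1.1.2 w.2).

Section Regions.
Variable F : realization D.

Lemma regrel_step w : regrel F st (walk_piece w) (walk_piece (step st w)).
Proof.
case: w => [[e [] b]]; rewrite /regrel /walk_piece /=.
  by rewrite (blk_band F e b) eqxx.
by case: (corner_arcmate st e.1 e.2 b) => [-> | ->]; rewrite eqxx ?orbT.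
Qed.

Lemma regrel_sym : symmetric (regrel F st).
Proof.
move=> u v; rewrite /regrel eq_sym; congr (_ || _).
case: u => [[x c]|[j c]]; case: v => [[y d]|[l d]] //.
by have [->|] := eqVneq x y; rewrite //= andbC.
Qed.

Lemma regrel_polepiece (p : pole D) c :
  midc st p.1 c -> regrel F st (polepiece st p) (inl (p.1, c)).
Proof.
move=> mid_c; rewrite /regrel /polepiece eqxx mid_c /midc.
by case: (st p.1); rewrite /= ?inordK ?orbT.
Qed.

Lemma connect_walk w i :
  connect (regrel F st) (walk_piece w) (walk_piece (iter i (step st) w)).
Proof.
elim: i => [|i IH]; first exact: connect0.
exact: connect_trans IH (connect1 (regrel_step _)).
Qed.

Lemma consec_same_region A p q r :
  consec_same st A p q -> in_region F st r p = in_region F st r q.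
Proof.
move=> [_ _ _ [k [b [n /= [_ mid_k _]]]]].
move: (connect_walk ((p.1, k), true, b) n).
case: (iter n (step st) _) => [[e out] b'] walk [_ e_q _ mid_e].
have reach_pq : connect (regrel F st) (polepiece st p) (polepiece st q).
  apply: connect_trans (connect1 (regrel_polepiece mid_k)) _.
  apply: connect_trans walk (connect1 _).
  by rewrite regrel_sym /walk_piece /= e_q; apply: regrel_polepiece.
rewrite /in_region; apply/idP/idP => reach; apply: connect_trans reach _ => //.
by rewrite (sym_connect_sym regrel_sym).
Qed.

End Regions.
End Orientation.

Lemma card_sep_setD2 (T : finType) (A : {set T}) (f : pred T) x y :
  x \in A -> y \in A -> y != x ->
  #|[set z in A | f z]| = #|[set z in (A :\ x) :\ y | f z]| + f x + f y.
Proof.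
move=> xA yA yx.
have -> : [set z in (A :\ x) :\ y | f z] = ([set z in A | f z] :\ x) :\ y.
  by apply/setP=> z; rewrite !inE -!andbA.
rewrite (cardsD1 x [set z in A | f z]) (cardsD1 y ([set z in A | f z] :\ x)) !inE.
by rewrite xA yA yx /= addnA addnC addnA.
Qed.

Section Balance.
Variables (D : tld) (F : realization D) (st : D -> bool).

Definition balanced (A : {set pole D}) : Prop := forall r,
  #|[set p in A | p.2 && in_region F st r p]| =
  #|[set p in A | ~~ p.2 && in_region F st r p]|.

Lemma balanced_poles0 : balanced (poles0 st).
Proof.
move=> r; pose flip (p : pole D) := (p.1, ~~ p.2).
have flipK : involutive flip by case=> x s; rewrite /flip negbK.
rewrite -(card_imset _ (inv_inj flipK)); apply: eq_card => p.
rewrite -[p in LHS]flipK (mem_imset _ _ (inv_inj flipK)) !inE /flip /=.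
by rewrite /in_region /polepiece.
Qed.

Lemma balanced_setD2 A p q : balanced A -> p \in A -> q \in A -> q != p ->
  q.2 = ~~ p.2 -> (forall r, in_region F st r p = in_region F st r q) ->
  balanced ((A :\ p) :\ q).
Proof.
move=> bal pA qA qp q2 reg_pq r; move: (bal r).
rewrite !(card_sep_setD2 _ pA qA qp) q2 -reg_pq.
case: (p.2); case: (in_region F st r p) => /= /eqP;
  by rewrite ?addn0 ?eqn_add2r => /eqP.
Qed.

Lemma reduces_balanced A B : reduces st A B ->
  A \subset poles0 st -> orientable st A -> balanced A -> balanced B.
Proof.
elim=> {A B} // A B p q consec _ IH A_poles orA balA.
have [q2 orA'] := orientable_reduction A_poles orA consec.
case: (consec) => pA qA qp _.
apply: IH => //.
  exact: subset_trans (subset_trans (subD1set _ _) (subD1set _ _)) A_poles.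
exact: balanced_setD2 balA pA qA qp q2 (fun r => consec_same_region F r consec).
Qed.

End Balance.

Theorem lemma3 (D : tld) (F : realization D) (st : D -> bool)
    (sbar : {set pole D}) (r : piece D) :
  reduces st (poles0 st) sbar -> irreducible st sbar ->
  #|[set p in sbar | p.2 && in_region F st r p]| =
  #|[set p in sbar | ~~ p.2 && in_region F st r p]|.
Proof.
move=> red _.
exact: reduces_balanced red (subxx _) (orientable_poles0 st)
  (balanced_poles0 F st) r.
Qed.
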